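(* Let $d\ge1$, $\emptyset\ne H\subset\mathbb{R}^d$, $r>0$, and let $\tilde x,\tilde y\in\mathbb{R}^d$ with $d(\tilde x,H)\ge r$ and $d(\tilde y,H)\ge r$. Let $\tilde f(s):=d(T_s\tilde x,T_s\tilde y)$ for $s\ge0$. Then $\tilde f$ is (right-)differentiable at $0$ and $$-\dot{\tilde f}(0)\le\frac{\tilde f(0)}{r}.$$
   Context: $d(\cdot,\cdot)$ is Euclidean distance and $d(x,H)=\inf_{y\in H}|x-y|$. Let $\bar H$ be the closure of $H$; for each $x$ let $\pi(x)\in\bar H$ be a point with $|x-\pi(x)|=d(x,H)$ (any one if several). For $s\ge0$, $T_s x:=x+s\frac{\pi(x)-x}{|\pi(x)-x|}$ if $d(x,H)>s$ and $T_s x:=\pi(x)$ if $d(x,H)\le s$. The derivative at $0$ is one-sided since $\tilde f$ is defined on $[0,\infty)$. *)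

From HB Require Import structures.
From mathcomp Require Import all_boot all_order all_algebra.
From mathcomp Require Import all_classical all_reals all_analysis.
Set Implicit Arguments. Unset Strict Implicit. Unset Printing Implicit Defensive.
Import Order.TTheory GRing.Theory Num.Theory.
Import numFieldNormedType.Exports.
Local Open Scope classical_set_scope.
Local Open Scope ring_scope.

Definition eucl_dist (R : realType) (d : nat) (x y : 'rV[R]_d) : R :=
  Num.sqrt (\sum_(i < d) (x ord0 i - y ord0 i) ^+ 2).

Definition distH (R : realType) (d : nat) (x : 'rV[R]_d) (H : set 'rV[R]_d) : R :=
  inf [set eucl_dist x y | y in H].

Definition eclosure (R : realType) (d : nat) (H : set 'rV[R]_d) : set 'rV[R]_d :=
  [set z | forall e : R, 0 < e -> exists2 y, H y & eucl_dist z y < e].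

Definition is_proj (R : realType) (d : nat) (H : set 'rV[R]_d)
  (pi : 'rV[R]_d -> 'rV[R]_d) : Prop :=
  forall x, eclosure H (pi x) /\ eucl_dist x (pi x) = distH x H.

Definition Ts (R : realType) (d : nat) (H : set 'rV[R]_d)
  (pi : 'rV[R]_d -> 'rV[R]_d) (s : R) (x : 'rV[R]_d) : 'rV[R]_d :=
  if s < distH x H then x + (s / eucl_dist (pi x) x) *: (pi x - x) else pi x.

From HB Require Import structures.
From mathcomp Require Import all_boot all_order all_algebra.
From mathcomp Require Import all_classical all_reals all_analysis.
From mathcomp Require Import ring lra.
Import Order.TTheory GRing.Theory Num.Theory.
Import numFieldNormedType.Exports.
Set Implicit Arguments. Unset Strict Implicit. Unset Printing Implicit Defensive.
Local Open Scope classical_set_scope.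
Local Open Scope ring_scope.

(* For s < r neither point has reached H, so each moves at unit speed straight
   towards its nearest point: with w = x - y and
   v = (pi x - x) / d(x,H) - (pi y - y) / d(y,H) we get f(s) = |w + s v|, whose
   right derivative at 0 is <w,v>/|w| (or |v| when w = 0).  Since pi x is at
   least as close to x as pi y is, and symmetrically for y, expanding
   |x - pi y|^2 >= d(x,H)^2 and |y - pi x|^2 >= d(y,H)^2 bounds -<w,v> by
   |w|^2 / r. *)

Section EuclideanNorm.
Variables (R : realType) (d : nat).
Implicit Types (u v w x y z : 'rV[R]_d) (a : R).

Definition dotv u v : R := \sum_(i < d) u ord0 i * v ord0 i.

Definition enorm u : R := Num.sqrt (dotv u u).

Lemma dotvC u v : dotv u v = dotv v u.
Proof. by apply: eq_bigr => i _; rewrite mulrC. Qed.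

Lemma dotvDl u v w : dotv (u + v) w = dotv u w + dotv v w.
Proof. by rewrite -big_split; apply: eq_bigr => i _; rewrite mxE mulrDl. Qed.

Lemma dotvZl a u v : dotv (a *: u) v = a * dotv u v.
Proof. by rewrite mulr_sumr; apply: eq_bigr => i _; rewrite mxE mulrA. Qed.

Lemma dotvDr u v w : dotv u (v + w) = dotv u v + dotv u w.
Proof. by rewrite dotvC dotvDl !(dotvC u). Qed.

Lemma dotvZr a u v : dotv u (a *: v) = a * dotv u v.
Proof. by rewrite dotvC dotvZl dotvC. Qed.

Lemma dotvBr u v w : dotv u (v - w) = dotv u v - dotv u w.
Proof. by rewrite -scaleN1r dotvDr dotvZr mulN1r. Qed.

Lemma dotv_line u v a :
  dotv (u + a *: v) (u + a *: v) = dotv u u + 2 * a * dotv u v + a ^+ 2 * dotv v v.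
Proof. by rewrite !(dotvDl, dotvDr, dotvZl, dotvZr) (dotvC v u); ring. Qed.

Lemma dotv_ge0 u : 0 <= dotv u u.
Proof. by apply: sumr_ge0 => i _; rewrite -expr2 sqr_ge0. Qed.

Lemma dotv_eq0 u : (dotv u u == 0) = (u == 0).
Proof.
apply/eqP/eqP => [uu0|->]; last by rewrite /dotv big1 // => i _; rewrite mxE mul0r.
apply/rowP => i; rewrite mxE; apply/eqP; rewrite -sqrf_eq0 expr2; apply/eqP.
by apply: (psumr_eq0P _ uu0) => // j _; rewrite -expr2 sqr_ge0.
Qed.

Lemma dotv_gt0 u : u != 0 -> 0 < dotv u u.
Proof. by move=> u0; rewrite lt_neqAle eq_sym dotv_eq0 u0 dotv_ge0. Qed.

Lemma dotv_CauchySchwarz u v : dotv u v ^+ 2 <= dotv u u * dotv v v.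
Proof.
have [->|v0] := eqVneq v 0.
  by rewrite -(scale0r 0) !dotvZr !mul0r expr0n mulr0.
have vv0 := dotv_gt0 v0.
have := dotv_ge0 (u + (- (dotv u v / dotv v v)) *: v); rewrite dotv_line.
have -> : dotv u u + 2 * - (dotv u v / dotv v v) * dotv u v +
    (- (dotv u v / dotv v v)) ^+ 2 * dotv v v =
    (dotv u u * dotv v v - dotv u v ^+ 2) / dotv v v.
  by field; rewrite gt_eqF.
by rewrite pmulr_lge0 ?invr_gt0 // subr_ge0.
Qed.

Lemma enorm_ge0 u : 0 <= enorm u.
Proof. exact: sqrtr_ge0. Qed.

Lemma enorm0 : enorm 0 = 0.
Proof. by rewrite /enorm -(scale0r 0) dotvZl mul0r sqrtr0. Qed.

Lemma enorm_gt0 u : u != 0 -> 0 < enorm u.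
Proof. by move=> u0; rewrite sqrtr_gt0 dotv_gt0. Qed.

Lemma enorm_sqr u : enorm u ^+ 2 = dotv u u.
Proof. by rewrite sqr_sqrtr // dotv_ge0. Qed.

Lemma dotv_le_enorm u v : dotv u v <= enorm u * enorm v.
Proof.
rewrite -sqrtrM ?dotv_ge0 //; apply: le_trans (ler_norm _) _.
by rewrite -sqrtr_sqr ler_wsqrtr // dotv_CauchySchwarz.
Qed.

Lemma enormZ a u : enorm (a *: u) = `|a| * enorm u.
Proof. by rewrite /enorm dotvZl dotvZr mulrA -expr2 sqrtrM ?sqr_ge0 // sqrtr_sqr. Qed.

Lemma enormN u : enorm (- u) = enorm u.
Proof. by rewrite -scaleN1r enormZ normrN normr1 mul1r. Qed.

Lemma enormD u v : enorm (u + v) <= enorm u + enorm v.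
Proof.
rewrite -(ger0_norm (addr_ge0 (enorm_ge0 u) (enorm_ge0 v))) -sqrtr_sqr.
rewrite /enorm ler_wsqrtr // -[v]scale1r dotv_line !scale1r sqrrD !enorm_sqr.
rewrite mulr2n; have := dotv_le_enorm u v; rewrite /enorm; lra.
Qed.

End EuclideanNorm.

Section DistanceToSet.
Variables (R : realType) (d : nat).
Implicit Types (x y z : 'rV[R]_d) (H : set 'rV[R]_d).

Lemma eucl_distE x y : eucl_dist x y = enorm (x - y).
Proof. by congr Num.sqrt; apply: eq_bigr => i _; rewrite !mxE expr2. Qed.

Lemma eucl_distC x y : eucl_dist x y = eucl_dist y x.
Proof. by rewrite !eucl_distE -enormN opprB. Qed.

Lemma eucl_dist_triangle x y z : eucl_dist x y <= eucl_dist x z + eucl_dist z y.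
Proof. by rewrite !eucl_distE -[x - y](subrKA z) enormD. Qed.

Lemma distH_le H x z : H z -> distH x H <= eucl_dist x z.
Proof.
move=> Hz; apply: ge_inf; last by exists z.
by exists 0 => _ [y _ <-]; rewrite eucl_distE enorm_ge0.
Qed.

Lemma distH_le_closure H x z : eclosure H z -> distH x H <= eucl_dist x z.
Proof.
move=> Hz; apply/ler_addgt0Pr => e e0; have [y Hy zy] := Hz e e0.
apply: le_trans (distH_le x Hy) _; apply: le_trans (eucl_dist_triangle x y z) _.
by rewrite eucl_distC lerD2l ltW.
Qed.

End DistanceToSet.

Lemma sqrt_quadratic_rquot (R : realType) (A B C : R) : 0 < C ->
  (fun s => (Num.sqrt (C + 2 * s * B + s ^+ 2 * A) - Num.sqrt C) / s) @ 0^'+ -->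
  B / Num.sqrt C.
Proof.
move=> C0; set q := fun s : R => C + 2 * s * B + s ^+ 2 * A.
have dq : is_derive (0 : R) 1 q (2 * B).
  rewrite /q; apply: is_derive_eq.
  by rewrite !(scaler0, mulr0, add0r, addr0, expr0n, scale0r) mul1r scaler1 [RHS]mulrC.
have q0 : q 0 = C by rewrite /q !(mulr0, mul0r, expr0n, addr0).
have ds := is_derive1_sqrt C0; rewrite -{1}q0 in ds.
have [dfq dfqE] := is_derive1_comp ds dq.
have := cvg_dnbhs_at_right dfq; rewrite -/(derive _ _ _) dfqE.
have -> : (2 * Num.sqrt C)^-1 * (2 * B) = B / Num.sqrt C.
  by field; rewrite gt_eqF ?sqrtr_gt0.
apply: cvg_trans; apply: near_eq_cvg; near=> s.
by rewrite /= scaler1 addr0 q0 mulrC.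
Unshelve. all: by end_near.
Qed.

Lemma enorm_line_rquot (R : realType) (d : nat) (w v : 'rV[R]_d) :
  (fun s => (enorm (w + s *: v) - enorm w) / s) @ 0^'+ -->
  (if w == 0 then enorm v else dotv w v / enorm w).
Proof.
have [->|w0] := eqVneq w 0.
  apply: cvg_near_cst; near=> s.
  have s0 : 0 < s by near: s; exact: nbhs_right_gt.
  by rewrite add0r enormZ gtr0_norm // enorm0 subr0 mulrC mulKf ?gt_eqF.
have -> : (fun s => (enorm (w + s *: v) - enorm w) / s) =
    (fun s => (Num.sqrt (dotv w w + 2 * s * dotv w v + s ^+ 2 * dotv v v)
               - Num.sqrt (dotv w w)) / s).
  by apply/funext => s; rewrite /enorm dotv_line.
exact: sqrt_quadratic_rquot (dotv_gt0 w0).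
Unshelve. all: by end_near.
Qed.

(* With [u = 1/a] and [t = 1/b] the left side is at most
   [C (t + u) / 2 + (b + a) (b - a) (t - u) / 2], and [(b - a) (t - u) <= 0]. *)
Lemma nearest_points_real_bound (R : realFieldType) (C al be a b r : R) :
  0 < r -> r <= a -> r <= b -> 0 <= C ->
  b ^+ 2 <= C + 2 * al + a ^+ 2 -> a ^+ 2 <= C - 2 * be + b ^+ 2 ->
  be / b - al / a <= C / r.
Proof.
move=> r0 ra rb C0 hal hbe.
have a0 : 0 < a := lt_le_trans r0 ra.
have b0 : 0 < b := lt_le_trans r0 rb.
have ua : a^-1 <= r^-1 by rewrite lef_pV2 ?posrE.
have ub : b^-1 <= r^-1 by rewrite lef_pV2 ?posrE.
have gap : (b - a) * (b^-1 - a^-1) = - ((b - a) ^+ 2 / (a * b)).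
  by field; rewrite !gt_eqF.
move: gap ua ub; set u := a^-1; set t := b^-1; set ir := r^-1 => gap ua ub.
have t0 : 0 < t by rewrite invr_gt0.
have u0 : 0 < u by rewrite invr_gt0.
have be_le : be * t <= (C + b ^+ 2 - a ^+ 2) / 2 * t by rewrite ler_pM2r //; lra.
have al_ge : - al * u <= (C + a ^+ 2 - b ^+ 2) / 2 * u by rewrite ler_pM2r //; lra.
have gap_le0 : (b + a) * ((b - a) * (t - u)) <= 0.
  by rewrite gap mulr_ge0_le0 ?oppr_le0 ?divr_ge0 ?sqr_ge0 ?ltW ?mulr_gt0 ?addr_gt0.
have C_le : C * (t + u) <= C * (ir + ir) by rewrite ler_wpM2l // lerD.
lra.
Qed.

Lemma nearest_points_dot_bound (R : realType) (d : nat) (x y p q : 'rV[R]_d) (r : R) :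
  0 < r -> r <= eucl_dist x p -> r <= eucl_dist y q ->
  eucl_dist x p <= eucl_dist x q -> eucl_dist y q <= eucl_dist y p ->
  - dotv (x - y) ((eucl_dist x p)^-1 *: (p - x) - (eucl_dist y q)^-1 *: (q - y))
    <= enorm (x - y) ^+ 2 / r.
Proof.
set a := eucl_dist x p; set b := eucl_dist y q => r0 ra rb xpq yqp.
have ha : dotv (p - x) (p - x) = a ^+ 2 by rewrite -enorm_sqr /a eucl_distC eucl_distE.
have hb : dotv (q - y) (q - y) = b ^+ 2 by rewrite -enorm_sqr /b eucl_distC eucl_distE.
have hp : eucl_dist y p = enorm ((x - y) + 1 *: (p - x)).
  by rewrite eucl_distC eucl_distE scale1r [in RHS]addrC addrA subrK.
have hq : eucl_dist x q = enorm ((x - y) + (-1) *: (q - y)).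
  by rewrite eucl_distE scaleN1r opprB addrA subrK.
have sq_le (s t : R) : 0 <= s -> s <= t -> s ^+ 2 <= t ^+ 2.
  by move=> s0 st; rewrite ler_sqr ?nnegrE // (le_trans s0).
have := sq_le _ _ (le_trans (ltW r0) rb) yqp.
have := sq_le _ _ (le_trans (ltW r0) ra) xpq.
rewrite hp hq !enorm_sqr !dotv_line ha hb sqrrN expr1n !mul1r => hxq hyp.
rewrite (dotvBr _ (_ *: _)) !dotvZr.
have -> : - ((a^-1 * dotv (x - y) (p - x)) - b^-1 * dotv (x - y) (q - y)) =
    dotv (x - y) (q - y) / b - dotv (x - y) (p - x) / a by ring.
by apply: nearest_points_real_bound => //; [exact: dotv_ge0 | lra | lra].
Qed.

Lemma Ts_lt (R : realType) (d : nat) (H : set 'rV[R]_d) pi s x :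
  is_proj H pi -> s < distH x H -> Ts H pi s x = x + (s / distH x H) *: (pi x - x).
Proof. by move=> proj sx; rewrite /Ts sx eucl_distC (proj x).2. Qed.

Theorem lemma4 (R : realType) (d : nat) (hd : (1 <= d)%N)
  (H : set 'rV[R]_d) (pi : 'rV[R]_d -> 'rV[R]_d) (r : R) (xt yt : 'rV[R]_d) :
  H !=set0 -> is_proj H pi -> 0 < r ->
  r <= distH xt H -> r <= distH yt H ->
  let ft := fun s : R => eucl_dist (Ts H pi s xt) (Ts H pi s yt) in
  exists L : R,
    (fun s : R => (ft s - ft 0) / s) @ 0^'+ --> L /\ - L <= ft 0 / r.
Proof.
move=> _ proj r0 rx ry ft.
have dx : eucl_dist xt (pi xt) = distH xt H := (proj xt).2.
have dy : eucl_dist yt (pi yt) = distH yt H := (proj yt).2.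
set w := xt - yt.
set v := (distH xt H)^-1 *: (pi xt - xt) - (distH yt H)^-1 *: (pi yt - yt).
have ft_line s : s < r -> ft s = enorm (w + s *: v).
  move=> sr; rewrite /ft eucl_distE !Ts_lt //; last 2 first.
  - exact: lt_le_trans sr ry.
  - exact: lt_le_trans sr rx.
  by rewrite /w /v (scalerBr s) !scalerA opprD addrACA.
have ft0 : ft 0 = enorm w by rewrite ft_line // scale0r addr0.
exists (if w == 0 then enorm v else dotv w v / enorm w); split.
  apply: (cvg_trans _ (@enorm_line_rquot _ _ w v)); apply: near_eq_cvg; near=> s.
  by rewrite ft0 ft_line //; near: s; exact: nbhs_right_lt.
have bound : - dotv w v <= enorm w ^+ 2 / r.
  rewrite /v -dx -dy; apply: nearest_points_dot_bound; rewrite ?dx ?dy //.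
  - exact: distH_le_closure (proj yt).1.
  - exact: distH_le_closure (proj xt).1.
rewrite ft0; case: eqP => [->|/eqP w0]; first by rewrite enorm0 mul0r oppr_le0 enorm_ge0.
by rewrite -mulNr ler_pdivrMr ?enorm_gt0 // mulrAC -expr2.
Unshelve. all: by end_near.
Qed.
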